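(* Let $\mathbb{A}$ be the Rado graph and $\mathbb{F}$ any field. For a finite set $S\subseteq\mathbb{A}$ let $f_S:\mathbb{A}\to\mathbb{F}$ be the indicator function of the set of vertices adjacent to every vertex of $S$, and let $V$ be the linear span of $\{f_S : S\subseteq\mathbb{A}\text{ finite}\}$. Then $V$ is not orbit-finitely spanned; consequently the space of finitely supported functions $\mathbb{A}\to\mathbb{F}$ (equivalently, the space of finitely supported linear maps $\operatorname{Lin}_{\mathbb{F}}\mathbb{A}\to\mathbb{F}$) is not orbit-finitely spanned.
   Context: The Rado graph is the Fraïssé limit of all finite undirected graphs (the countable homogeneous graph into which every finite graph embeds), with automorphism group $\operatorname{Aut}(\mathbb{A})$. $\operatorname{Aut}(\mathbb{A})$ acts on functions $f:\mathbb{A}\to\mathbb{F}$ by $(\pi f)(a)=f(\pi^{-1}a)$; a function is finitely supported if there is a finite $T\subseteq\mathbb{A}$ such that every automorphism fixing $T$ pointwise fixes $f$. A vector space with a linear $\operatorname{Aut}(\mathbb{A})$-action in which every vector is finitely supported is orbit-finitely spanned if it is spanned by an $\operatorname{Aut}(\mathbb{A})$-invariant subset with finitely many orbits (each of whose elements is finitely supported). *)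

From mathcomp Require Import all_boot all_algebra.
From Stdlib Require List.
Set Implicit Arguments. Unset Strict Implicit. Unset Printing Implicit Defensive.
Import GRing.Theory.
Local Open Scope ring_scope.

(* A countable simple graph (A, E) with the extension property: this is,
   up to isomorphism, exactly the Rado graph. *)
Definition is_rado_graph (A : Type) (E : A -> A -> bool) : Prop :=
  (exists enc : A -> nat, injective enc) /\
  (forall x y, E x y = E y x) /\
  (forall x, E x x = false) /\
  (forall U W : seq A, (forall u, List.In u U -> ~ List.In u W) ->
     exists v, ~ List.In v U /\ ~ List.In v W /\
       (forall u, List.In u U -> E u v) /\
       (forall w, List.In w W -> E w v = false)).

Definition is_aut (A : Type) (E : A -> A -> bool) (p q : A -> A) : Prop :=
  cancel p q /\ cancel q p /\ (forall x y, E (p x) (p y) = E x y).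

(* (pi f)(a) = f (pi^{-1} a), where q = pi^{-1}. *)
Definition act (A F : Type) (q : A -> A) (f : A -> F) : A -> F := fun a => f (q a).

Definition fin_supp (A F : Type) (E : A -> A -> bool) (f : A -> F) : Prop :=
  exists T : seq A, forall p q, is_aut E p q ->
    (forall t, List.In t T -> p t = t) -> act q f = f.

Definition span (A : Type) (F : fieldType) (G : (A -> F) -> Prop) (h : A -> F) : Prop :=
  exists s : seq (F * (A -> F)), (forall x, List.In x s -> G x.2) /\
    forall a, h a = \sum_(x <- s) x.1 * x.2 a.

Definition orbits (A F : Type) (E : A -> A -> bool) (gens : seq (A -> F)) (h : A -> F) : Prop :=
  exists g, List.In g gens /\ exists p q, is_aut E p q /\ h = act q g.

(* V is spanned by an invariant subset with finitely many orbits, made of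
   finitely supported elements of V. *)
Definition orbit_finitely_spanned (A : Type) (F : fieldType) (E : A -> A -> bool)
  (V : (A -> F) -> Prop) : Prop :=
  exists gens : seq (A -> F),
    (forall g, List.In g gens -> V g /\ fin_supp E g) /\
    (forall h, V h <-> span (orbits E gens) h).

Definition fS (A : Type) (F : fieldType) (E : A -> A -> bool) (S : seq A) : A -> F :=
  fun a => if all (fun s => E s a) S then 1 else 0.

Definition Vcommon (A : Type) (F : fieldType) (E : A -> A -> bool) : (A -> F) -> Prop :=
  span (fun g => exists S : seq A, g = fS F E S).

From Pilot Require Import Defs.
From HB Require Import structures.
From mathcomp Require Import all_boot all_algebra.
From Stdlib Require List ClassicalEpsilon FunctionalExtensionality.
Set Implicit Arguments. Unset Strict Implicit. Unset Printing Implicit Defensive.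
Import GRing.Theory.
Local Open Scope ring_scope.

(* A finitely supported function g is fixed by the automorphisms fixing its support T, and
   the Rado graph is homogeneous (back and forth), so off T the value g v depends only on the
   adjacency of v to T.  This property, with the same bound D on |T|, survives the action of
   automorphisms; hence an orbit-finitely spanned space consists of sums of functions each
   determined by the adjacency to at most D vertices.  No such sum equals f_S when S has D+1
   distinct vertices: for s in S, pass from f to v |-> f v - f v', where v' is a twin of v that
   is not adjacent to s but agrees with v on every other vertex in play.  This kills the summands
   whose support misses s and turns f_(s::S) into f_S, so after |S| steps 0 = 1. *)

Lemma inP (T : eqType) (x : T) (s : seq T) : reflect (List.In x s) (x \in s).
Proof.
elim: s => [|y s IH] /=; first by right.
rewrite in_cons; apply: (iffP orP) => -[].
- by move/eqP ->; left.
- by move/IH; right.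
- by move=> ->; left.
- by move/IH; right.
Qed.

Section Span.
Variables (A : Type) (F : fieldType).
Implicit Types (G H : (A -> F) -> Prop) (f g h : A -> F).

Lemma span_gen G g : G g -> Defs.span G g.
Proof. by move=> Gg; exists [:: (1, g)]; split=> [x [<-|[]] | a] //; rewrite big_seq1 mul1r. Qed.

Lemma span_ext G f g : f =1 g -> Defs.span G f -> Defs.span G g.
Proof. by move=> fg [s [Gs e]]; exists s; split=> // a; rewrite -fg. Qed.

Lemma span0 G : Defs.span G (fun _ => 0).
Proof. by exists [::]; split=> // a; rewrite big_nil. Qed.

Lemma spanD G f g : Defs.span G f -> Defs.span G g -> Defs.span G (fun a => f a + g a).
Proof.
move=> [s [Gs ef]] [t [Gt eg]]; exists (s ++ t); split=> [x /List.in_app_iff [] | a].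
- exact: Gs.
- exact: Gt.
- by rewrite big_cat ef eg.
Qed.

Lemma spanZ G c f : Defs.span G f -> Defs.span G (fun a => c * f a).
Proof.
move=> [s [Gs ef]]; exists [seq (c * x.1, x.2) | x <- s]; split=> [x | a].
- by move=> /List.in_map_iff [y [<- /Gs]].
- by rewrite ef big_map big_distrr; apply: eq_bigr => x _ /=; rewrite mulrA.
Qed.

Lemma span_trans G H h : (forall g, G g -> Defs.span H g) -> Defs.span G h -> Defs.span H h.
Proof.
move=> GH [s [Gs e]]; apply: span_ext (fun a => esym (e a)) _.
elim: s Gs {e} => [_ | x s IH Gs].
  by apply: span_ext (span0 H) => a; rewrite big_nil.
apply: span_ext (spanD (spanZ x.1 (GH _ (Gs x (or_introl erefl))))
                       (IH (fun y sy => Gs y (or_intror sy)))) => a.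
by rewrite big_cons.
Qed.

Lemma span_vanish G h a : (forall g, G g -> g a = 0) -> Defs.span G h -> h a = 0.
Proof.
move=> G0 [s [Gs ->]]; elim: s Gs => [|x s IH] Gs; first by rewrite big_nil.
by rewrite big_cons G0 ?IH ?mulr0 ?add0r // => [y sy|]; apply: Gs; [right|left].
Qed.

Lemma span_diff (tau : A -> A) G H h :
  (forall g, G g -> H (fun a => g a - g (tau a))) ->
  Defs.span G h -> Defs.span H (fun a => h a - h (tau a)).
Proof.
move=> GH [s [Gs e]].
exists [seq (x.1, fun a => x.2 a - x.2 (tau a)) | x <- s]; split=> [x | a].
- by move=> /List.in_map_iff [y [<- /Gs /GH]].
- by rewrite !e big_map -sumrB; apply: eq_bigr => x _; rewrite mulrBr.
Qed.

End Span.

Lemma fS_cons (A : Type) (F : fieldType) (E : A -> A -> bool) s S a :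
  fS F E (s :: S) a = if E s a then fS F E S a else 0.
Proof. by rewrite /fS /=; case: (E s a). Qed.

Lemma fS_Vcommon (A : Type) (F : fieldType) (E : A -> A -> bool) S :
  Vcommon E (fS F E S).
Proof. by apply: span_gen; exists S. Qed.

Section RadoGraph.
Variables (A : Type) (E : A -> A -> bool) (F : fieldType) (enc : A -> nat).
Hypothesis enc_inj : injective enc.
Hypothesis Esym : forall x y, E x y = E y x.
Hypothesis Eirr : forall x, E x x = false.
Hypothesis Eext : forall U W : seq A, (forall u, List.In u U -> ~ List.In u W) ->
  exists v, ~ List.In v U /\ ~ List.In v W /\
    (forall u, List.In u U -> E u v) /\ (forall w, List.In w W -> E w v = false).

HB.instance Definition _ := Equality.copy A (inj_type enc_inj).

Lemma extension (U W : seq A) : (forall u, u \in U -> u \notin W) ->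
  exists v, [/\ v \notin U, v \notin W, {in U, forall u, E u v} & {in W, forall w, ~~ E w v}].
Proof.
move=> UW; have [|v [vU [vW [EU EW]]]] := Eext (U := U) (W := W).
  by move=> u /inP uU /inP; apply/negP/UW.
exists v; split; try by apply/inP.
- by move=> u /inP /EU.
- by move=> w /inP /EW ->.
Qed.

Lemma fS_eq S v w : {in S, forall s, E s v = E s w} -> fS F E S v = fS F E S w.
Proof. by move=> Sv; rewrite /fS (eq_in_all Sv). Qed.

Lemma fS_fin_supp S : fin_supp E (fS F E S).
Proof.
exists S => p q [_ [qK pE]] pS; apply: FunctionalExtensionality.functional_extensionality => a.
by apply: fS_eq => s /inP sS; rewrite -[in RHS](qK a) -pE pS.
Qed.

Lemma uniq_seq_of_size n : exists S : seq A, uniq S /\ size S = n.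
Proof.
elim: n => [|n [S [uS <-]]]; first by exists [::].
have [//|v [_ vS _ _]] := extension (U := [::]) (W := S).
by exists (v :: S); rewrite /= vS.
Qed.

(** * Homogeneity *)

Definition partial_iso (L : seq (A * A)) :=
  forall a b a' b', (a, b) \in L -> (a', b') \in L -> (a == a') = (b == b') /\ E a a' = E b b'.

Lemma partial_iso_cons a b L : partial_iso L ->
  (forall a' b', (a', b') \in L -> (a == a') = (b == b') /\ E a a' = E b b') ->
  partial_iso ((a, b) :: L).
Proof.
move=> isoL abL a1 b1 a2 b2; rewrite !in_cons.
case/predU1P => [[-> ->] | L1]; case/predU1P => [[-> ->] | L2].
- by rewrite !eqxx !Eirr.
- exact: abL.
- by have [eab Eab] := abL _ _ L1; rewrite eq_sym eab eq_sym Esym Eab Esym.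
- exact: isoL.
Qed.

Definition flip (p : A * A) : A * A := (p.2, p.1).

Lemma flipK : involutive flip. Proof. by case. Qed.

Lemma partial_iso_flip L : partial_iso L -> partial_iso (map flip L).
Proof.
move=> isoL a b a' b'; rewrite -[(a, b)]/(flip (b, a)) -[(a', b')]/(flip (b', a')).
by rewrite !(mem_map (inv_inj flipK)) => /isoL H /H [-> ->].
Qed.

Lemma partial_iso_forth L a : partial_iso L -> exists b, partial_iso ((a, b) :: L).
Proof.
move=> isoL; have [/mapP [[a0 b] abL /= ->] | adom] := boolP (a \in map fst L).
  by exists b; apply: partial_iso_cons => // a' b'; apply: isoL.
set Up := [seq p.2 | p <- L & E a p.1]; set Wn := [seq p.2 | p <- L & ~~ E a p.1].
have [|b [bU bW EU EW]] := extension (U := Up) (W := Wn).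
  move=> _ /mapP [[a1 b1] /[!mem_filter] /andP [/= Ea1 L1] ->].
  apply/mapP => -[[a2 b2] /[!mem_filter] /andP [/= Ea2 L2] /= eb].
  have [+ _] := isoL _ _ _ _ L1 L2; rewrite eb eqxx => /eqP a12.
  by rewrite -a12 Ea1 in Ea2.
exists b; apply: partial_iso_cons => // a' b' L'.
have aa' : (a == a') = false by apply: contraNF adom => /eqP ->; apply: map_f L'.
have [Ea' | nEa'] := boolP (E a a').
- have b'U : b' \in Up by apply/mapP; exists (a', b'); rewrite // mem_filter Ea'.
  by rewrite aa' Esym EU //; split=> //; apply/esym; apply: contraNF bU => /eqP ->.
- have b'W : b' \in Wn by apply/mapP; exists (a', b'); rewrite // mem_filter nEa'.
  rewrite aa' Esym (negbTE (EW _ b'W)); split=> //.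
  by apply/esym; apply: contraNF bW => /eqP ->.
Qed.

Lemma partial_iso_back L b : partial_iso L -> exists a, partial_iso ((a, b) :: L).
Proof.
move=> /partial_iso_flip /(partial_iso_forth b) [a isoL']; exists a.
by have := partial_iso_flip isoL'; rewrite /= (mapK flipK).
Qed.

Definition choose_image L a := ClassicalEpsilon.epsilon (inhabits a)
  (fun b => partial_iso ((a, b) :: L)).
Definition choose_preimage L b := ClassicalEpsilon.epsilon (inhabits b)
  (fun a => partial_iso ((a, b) :: L)).

Lemma choose_imageP L a : partial_iso L -> partial_iso ((a, choose_image L a) :: L).
Proof. by move=> /(partial_iso_forth a); apply: ClassicalEpsilon.epsilon_spec. Qed.

Lemma choose_preimageP L b : partial_iso L -> partial_iso ((choose_preimage L b, b) :: L).
Proof. by move=> /(partial_iso_back b); apply: ClassicalEpsilon.epsilon_spec. Qed.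

Section BackAndForth.
Variables (a0 : A) (L0 : seq (A * A)).
Hypothesis L0_iso : partial_iso L0.

(* [decode n] is arbitrary when [n] codes no vertex, which is harmless for [extend]. *)
Definition decode n := ClassicalEpsilon.epsilon (inhabits a0) (fun a => enc a = n).

Lemma decode_enc x : decode (enc x) = x.
Proof.
apply: enc_inj; apply: (ClassicalEpsilon.epsilon_spec _ (fun a => enc a = _)).
by exists x.
Qed.

(* Step [n] puts the vertex coded by [n] both into the domain and into the range. *)
Definition extend n L :=
  let a := decode n in let L1 := (a, choose_image L a) :: L in
  (choose_preimage L1 a, a) :: L1.

Fixpoint chain n := if n is n'.+1 then extend n' (chain n') else L0.

Lemma chain_iso n : partial_iso (chain n).
Proof. by elim: n => //= n IH; apply/choose_preimageP/choose_imageP. Qed.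

Lemma chain_mono : {homo chain : m n / (m <= n)%N >-> {subset m <= n}}.
Proof.
apply: homo_leq => [L x // | L2 L1 L3 sub12 sub23 x /sub12 /sub23 // | n x Lx].
by rewrite /= /extend !in_cons Lx !orbT.
Qed.

Lemma chain_union_iso m n a b a' b' : (a, b) \in chain m -> (a', b') \in chain n ->
  (a == a') = (b == b') /\ E a a' = E b b'.
Proof.
by move=> /(chain_mono (leq_maxl m n)) ab /(chain_mono (leq_maxr m n)); apply: chain_iso.
Qed.

Definition forward x := choose_image (chain (enc x)) x.
Definition backward y := choose_preimage ((y, forward y) :: chain (enc y)) y.

Lemma forward_chain x : (x, forward x) \in chain (enc x).+1.
Proof. by rewrite /= /extend decode_enc !in_cons eqxx orbT. Qed.

Lemma backward_chain y : (backward y, y) \in chain (enc y).+1.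
Proof. by rewrite /= /extend decode_enc in_cons eqxx. Qed.

Lemma chain_aut : is_aut E forward backward.
Proof.
split; [|split] => [x | y | x y].
- have [+ _] := chain_union_iso (forward_chain x) (backward_chain (forward x)).
  by rewrite eqxx => /eqP <-.
- have [+ _] := chain_union_iso (forward_chain (backward y)) (backward_chain y).
  by rewrite eqxx => /esym /eqP.
- by have [_ ->] := chain_union_iso (forward_chain x) (forward_chain y).
Qed.

Lemma forward_L0 a b : (a, b) \in L0 -> forward a = b.
Proof.
move=> ab; have [+ _] := chain_union_iso (m := 0) ab (forward_chain a).
by rewrite eqxx => /esym /eqP.
Qed.

End BackAndForth.

Lemma homogeneous (T : seq A) (v w : A) :
  v \notin T -> w \notin T -> {in T, forall t, E t v = E t w} ->
  exists p q, [/\ is_aut E p q, {in T, forall t, p t = t} & p v = w].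
Proof.
move=> vT wT Tvw; set L0 := (v, w) :: [seq (t, t) | t <- T].
have L0_iso : partial_iso L0.
  apply: partial_iso_cons => [a b a' b' /mapP [t _ [-> ->]] /mapP [t' _ [-> ->]] //|].
  move=> _ _ /mapP [t tT [-> ->]]; rewrite !(Esym _ t) Tvw //.
  by rewrite ![_ == t]eq_sym (negbTE (memPn vT t tT)) (negbTE (memPn wT t tT)).
exists (forward v L0), (backward v L0); split; first exact: chain_aut.
- by move=> t tT; apply: (forward_L0 v L0_iso); rewrite in_cons map_f ?orbT.
- by apply: (forward_L0 v L0_iso); rewrite mem_head.
Qed.

(** * Functions determined by a bounded adjacency type *)

Definition depends_on_type (T : seq A) (phi : A -> F) :=
  forall v w, v \notin T -> w \notin T -> {in T, forall t, E t v = E t w} -> phi v = phi w.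

Definition type_bounded (D : nat) (phi : A -> F) :=
  exists2 T : seq A, (size T <= D)%N & depends_on_type T phi.

Lemma fin_supp_type_bounded g : fin_supp E g -> exists D, type_bounded D g.
Proof.
move=> [T fixT]; exists (size T), T => // v w vT wT Tvw.
have [p [q [aut pT pv]]] := homogeneous vT wT Tvw.
have pT' t : List.In t T -> p t = t by move/inP; apply: pT.
have /(congr1 (fun f => f w)) := fixT p q aut pT'.
by rewrite /act -pv (proj1 aut).
Qed.

Lemma type_bounded_act D p q g : is_aut E p q -> type_bounded D g -> type_bounded D (act q g).
Proof.
move=> [pK [qK pE]] [T sizeT Tg]; exists (map p T); first by rewrite size_map.
have qNT x : x \notin map p T -> q x \notin T.
  by apply: contra => qxT; rewrite -[x]qK map_f.
move=> v w /qNT vT /qNT wT Tvw; apply: Tg => // t tT.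
by rewrite -[E t (q v)]pE -[E t (q w)]pE !qK Tvw ?map_f.
Qed.

Lemma type_bounded_uniform (gs : seq (A -> F)) :
  (forall g, List.In g gs -> exists D, type_bounded D g) ->
  exists D, forall g, List.In g gs -> type_bounded D g.
Proof.
have type_bounded_le m n g : (m <= n)%N -> type_bounded m g -> type_bounded n g.
  by move=> mn [T sizeT Tg]; exists T => //; apply: leq_trans mn.
elim: gs => [_ | g gs IH gsD]; first by exists 0%N.
have [m gm] := gsD g (or_introl erefl).
have [n gsn] := IH (fun h hgs => gsD h (or_intror hgs)).
exists (maxn m n) => h [<- | hgs].
- exact: type_bounded_le (leq_maxl m n) gm.
- exact: type_bounded_le (leq_maxr m n) (gsn h hgs).
Qed.

(** * Finite differences along twins *)

Section Differencing.
Variable U : seq A.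

Definition region (X : seq A) (v : A) := (v \notin U) && all (E^~ v) X.

Lemma region_nonempty X : exists v, region X v.
Proof.
have [|v [vX vU EX _]] := extension (U := X) (W := [seq u <- U | u \notin X]).
  by move=> u uX; rewrite mem_filter uX.
exists v; apply/andP; split; last exact/allP.
by apply: contra vU => vU; rewrite mem_filter vX.
Qed.

Definition twin s v := ClassicalEpsilon.epsilon (inhabits v) (fun v' =>
  [/\ v' \notin U, ~~ E s v' & {in U, forall u, u != s -> E u v' = E u v}]).

Lemma twin_exists s v : exists v',
  [/\ v' \notin U, ~~ E s v' & {in U, forall u, u != s -> E u v' = E u v}].
Proof.
have [|v' [v'P v'N EP EN]] := extension (U := [seq u <- U | (u != s) && E u v])
                                        (W := s :: [seq u <- U | (u != s) && ~~ E u v]).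
  move=> u; rewrite in_cons !mem_filter => /andP [/andP [us Euv] _].
  by rewrite negb_or us Euv.
exists v'; split.
- apply/negP => v'U; have [v's | v's] := eqVneq v' s.
    by move: v'N; rewrite v's mem_head.
  case Ev'v: (E v' v).
  + by move: v'P; rewrite mem_filter v's Ev'v v'U.
  + by move: v'N; rewrite in_cons mem_filter v's Ev'v v'U orbT.
- by apply: EN; rewrite mem_head.
- move=> u uU us; case Euv: (E u v).
  + by apply: EP; rewrite mem_filter us Euv.
  + by apply/negbTE/EN; rewrite in_cons mem_filter us Euv uU orbT.
Qed.

Lemma twinP s v : [/\ twin s v \notin U, ~~ E s (twin s v)
  & {in U, forall u, u != s -> E u (twin s v) = E u v}].
Proof. exact: ClassicalEpsilon.epsilon_spec (twin_exists s v). Qed.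

Definition diff s (phi : A -> F) : A -> F := fun v => phi v - phi (twin s v).

Lemma region_twin X s v : {subset X <= U} -> s \notin X -> region X v -> region X (twin s v).
Proof.
move=> XU sX /andP [_ EX]; have [tU _ Etw] := twinP s v.
rewrite /region tU; apply/allP => x xX /=; rewrite Etw.
- exact: (allP EX).
- exact: XU.
- by apply: contraNneq sX => <-.
Qed.

Definition depends_on_type_in (X T : seq A) (phi : A -> F) :=
  forall v w, region X v -> region X w -> {in T, forall t, E t v = E t w} -> phi v = phi w.

Definition admissible (S X : seq A) (phi : A -> F) :=
  (forall v, region X v -> phi v = 0) \/
  exists T, [/\ {subset T <= U}, ~ {subset S <= T} & depends_on_type_in X T phi].

(* Differencing along [s] kills every admissible function whose type does not involve [s]. *)
Lemma admissible_diff s S X phi : {subset X <= U} -> s \notin X ->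
  admissible (s :: S) X phi -> admissible S (s :: X) (diff s phi).
Proof.
move=> XU sX phiS.
have regionX v : region (s :: X) v -> region X v by case/and3P => vU _ EX; apply/andP.
case: phiS => [phi0 | [T [TU sST Tphi]]].
  by left=> v /regionX vX; rewrite /diff !phi0 ?subrr //; apply: region_twin.
have [sT | sNT] := boolP (s \in T).
- right; exists T; split=> //.
    by apply: contra_not sST => ST x; rewrite in_cons => /predU1P [-> | /ST].
  move=> v w /regionX vX /regionX wX Tvw; rewrite /diff (Tphi v w) //.
  congr (_ - _); apply: Tphi; rewrite ?region_twin // => t tT.
  have [_ ntv Etv] := twinP s v; have [_ ntw Etw] := twinP s w.
  have [-> | ts] := eqVneq t s; first by rewrite (negbTE ntv) (negbTE ntw).
  by rewrite Etv ?Etw ?TU // Tvw.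
- left=> v /regionX vX; rewrite /diff (Tphi v (twin s v)) ?subrr ?region_twin // => t tT.
  have [_ _ Etv] := twinP s v; rewrite Etv ?TU //.
  by apply: contraNneq sNT => <-.
Qed.

Lemma admissible_span_neq_fS S X h : uniq S -> {subset S <= U} -> {subset X <= U} ->
  (forall x, x \in S -> x \notin X) -> Defs.span (admissible S X) h ->
  ~ (forall v, region X v -> h v = fS F E S v).
Proof.
elim: S X h => [|s S IH] X h uS SU XU SX hspan hfS.
  have [v vX] := region_nonempty X.
  have := hfS v vX; rewrite (span_vanish _ hspan) ?/fS /=.
    by move/esym/eqP; rewrite oner_eq0.
  by move=> g [g0 | [T [_ nsub _]]]; [apply: g0 | case: nsub].
case/andP: uS => sS uS; have sNX := SX s (mem_head s S).
apply: (IH (s :: X) (diff s h) uS).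
- by move=> x xS; apply: SU; rewrite in_cons xS orbT.
- by move=> x /predU1P [-> | /XU //]; apply: SU; rewrite mem_head.
- move=> x xS; rewrite in_cons negb_or SX ?in_cons ?xS ?orbT // andbT.
  by apply: contraNneq sS => <-.
- by apply: span_diff hspan => g; apply: admissible_diff.
- move=> v /and3P [vU Esv EX]; have vX : region X v by apply/andP.
  have [_ nEst _] := twinP s v.
  by rewrite /diff !hfS ?region_twin // !fS_cons Esv (negbTE nEst) subr0.
Qed.

End Differencing.

Lemma common_support (I : Type) (P : seq A -> I -> Prop) (l : seq I) :
  (forall i, List.In i l -> exists T, P T i) ->
  exists U : seq A, forall i, List.In i l -> exists T, {subset T <= U} /\ P T i.
Proof.
elim: l => [_ | i l IH lP]; first by exists [::].
have [T iT] := lP i (or_introl erefl).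
have [U lU] := IH (fun j jl => lP j (or_intror jl)).
exists (T ++ U) => j [<- | /lU [T' [T'U jT']]].
- by exists T; split=> // t tT; rewrite mem_cat tT.
- by exists T'; split=> // t /T'U tU; rewrite mem_cat tU orbT.
Qed.

Lemma fS_notin_span_type_bounded D S : uniq S -> size S = D.+1 ->
  ~ Defs.span (type_bounded D) (fS F E S).
Proof.
move=> uS sizeS [l [lD e]].
have [U lU] : exists U : seq A, forall x, List.In x l ->
    exists T, {subset T <= U} /\ (size T <= D)%N /\ depends_on_type T x.2.
  by apply: common_support => x /lD [T sizeT Tx]; exists T.
apply: (@admissible_span_neq_fS (S ++ U) S [::] (fS F E S) uS) => //.
- by move=> x xS; rewrite mem_cat xS.
- exists l; split=> // x /lU [T [TU [sizeT Tx]]]; right; exists T; split.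
  + by move=> t /TU tU; rewrite mem_cat tU orbT.
  + by move=> ST; have := leq_trans (uniq_leq_size uS ST) sizeT; rewrite sizeS ltnn.
  + move=> v w /andP [vU _] /andP [wU _]; apply: Tx.
    * by apply: contra vU; rewrite mem_cat => /TU ->; rewrite orbT.
    * by apply: contra wU; rewrite mem_cat => /TU ->; rewrite orbT.
Qed.

Theorem not_orbit_finitely_spanned (V : (A -> F) -> Prop) :
  (forall S, V (fS F E S)) -> ~ orbit_finitely_spanned E V.
Proof.
move=> VfS [gens [gensV Vspan]].
have [D gensD] := type_bounded_uniform
  (fun g gg => fin_supp_type_bounded (proj2 (gensV g gg))).
have [S [uS sizeS]] := uniq_seq_of_size D.+1.
apply: (fS_notin_span_type_bounded uS sizeS).
apply: span_trans (proj1 (Vspan _) (VfS S)) => _ [g [gg [p [q [aut ->]]]]].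
exact/span_gen/(type_bounded_act aut)/gensD.
Qed.

End RadoGraph.

Theorem mainTheorem18 (A : Type) (E : A -> A -> bool) (F : fieldType) :
  is_rado_graph E ->
  ~ @orbit_finitely_spanned A F E (@Vcommon A F E) /\
  ~ @orbit_finitely_spanned A F E (fun f : A -> F => @fin_supp A F E f).
Proof.
move=> [[enc enc_inj] [Esym [Eirr Eext]]].
have not_ofs := @not_orbit_finitely_spanned A E F enc enc_inj Esym Eirr Eext.
by split; apply: not_ofs => S; [exact: fS_Vcommon | exact: (@fS_fin_supp A E F enc enc_inj)].
Qed.
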